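(* Let $X$ be one of the types below, of rank $l$, with finite Weyl group $W$ having Coxeter number $h$ and exponents $m_1,\dots,m_l$ (so that $\exp(2\pi i m_j/h)$, $j=1,\dots,l$, are the eigenvalues of a Coxeter transformation of $W$). Setting $\zeta=e^{2\pi i/h}$, $$\prod_{j=1}^l\bigl(t^2-\zeta^{m_j}\bigr)=\frac{(1-t^{2h})(1-t^{2p})(1-t^{2q})(1-t^{2r})}{(1-t^2)(1-t^a)(1-t^b)(1-t^h)},$$ where $(a,b,h,p,q,r)$ is given by: $\mathsf A_l$ ($l\ge0$): $(2,\,l+1,\,l+1,\,\tfrac12(l+1),\,\tfrac12(l+1),\,1)$; $\mathsf D_l$ ($l\ge4$): $(4,\,2l-4,\,2l-2,\,l-2,\,2,\,2)$; $\mathsf E_6$: $(6,8,12,3,3,2)$; $\mathsf E_7$: $(8,12,18,4,3,2)$; $\mathsf E_8$: $(12,20,30,5,3,2)$; $\mathsf C_l$ ($l\ge2$): $(2,\,2l,\,2l,\,l,\,1,\,1)$; $\mathsf B_l$ ($l\ge3$): $(4,\,2l-2,\,2l,\,l-1,\,2,\,1)$; $\mathsf F_4$: $(6,8,12,3,2,1)$; $\mathsf G_2$: $(4,4,6,2,1,1)$. *)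

From HB Require Import structures.
From mathcomp Require Import all_boot all_order all_algebra.
From mathcomp Require Import complex Rstruct.
From Stdlib Require Import Reals.
Set Implicit Arguments. Unset Strict Implicit. Unset Printing Implicit Defensive.
Import GRing.Theory Num.Theory.

Notation CC := (complex Rdefinitions.R).

Inductive cartan_type : Type :=
| TA of nat | TB of nat | TC of nat | TD of nat
| TE6 | TE7 | TE8 | TF4 | TG2.

Definition admissible (X : cartan_type) : bool :=
  match X with
  | TA _ => true
  | TB l => (3 <= l)%N
  | TC l => (2 <= l)%N
  | TD l => (4 <= l)%N
  | _ => true
  end.

(* Exponents m_1, ..., m_l of the Weyl group (standard tables, Bourbaki);
   the size of this list is the rank l. *)
Definition exponents (X : cartan_type) : seq nat :=
  match X with
  | TA l => iota 1 l
  | TB l => [seq (2 * i).+1 | i <- iota 0 l]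
  | TC l => [seq (2 * i).+1 | i <- iota 0 l]
  | TD l => rcons [seq (2 * i).+1 | i <- iota 0 l.-1] l.-1
  | TE6 => [:: 1; 4; 5; 7; 8; 11]
  | TE7 => [:: 1; 5; 7; 9; 11; 13; 17]
  | TE8 => [:: 1; 7; 11; 13; 17; 19; 23; 29]
  | TF4 => [:: 1; 5; 7; 11]
  | TG2 => [:: 1; 5]
  end%N.

Definition rank (X : cartan_type) : nat := size (exponents X).

Definition coxeter_number (X : cartan_type) : nat :=
  match X with
  | TA l => l.+1
  | TB l => 2 * l
  | TC l => 2 * l
  | TD l => 2 * l - 2
  | TE6 => 12 | TE7 => 18 | TE8 => 30 | TF4 => 12 | TG2 => 6
  end%N.

(* The tuple (a, b, h, 2p, 2q, r) of the theorem's table.  Since p, q are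
   half-integers for type A, we record 2p and 2q (only t^(2p), t^(2q) occur). *)
Definition table (X : cartan_type) : nat * nat * nat * nat * nat * nat :=
  match X with
  | TA l => (2, l.+1, l.+1, l.+1, l.+1, 1)
  | TD l => (4, 2 * l - 4, 2 * l - 2, 2 * (l - 2), 4, 2)
  | TE6 => (6, 8, 12, 6, 6, 2)
  | TE7 => (8, 12, 18, 8, 6, 2)
  | TE8 => (12, 20, 30, 10, 6, 2)
  | TC l => (2, 2 * l, 2 * l, 2 * l, 2, 1)
  | TB l => (4, 2 * l - 2, 2 * l, 2 * (l - 1), 4, 1)
  | TF4 => (6, 8, 12, 6, 4, 1)
  | TG2 => (4, 4, 6, 4, 2, 1)
  end%N.

Definition zeta (h : nat) : CC :=
  Complex (cos (2 * PI / INR h))%R (sin (2 * PI / INR h))%R.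

Local Open Scope ring_scope.

Definition rhs_num (X : cartan_type) (t : CC) : CC :=
  let: (a, b, h, p2, q2, r) := table X in
  (1 - t ^+ (2 * h)) * (1 - t ^+ p2) * (1 - t ^+ q2) * (1 - t ^+ (2 * r)).

Definition rhs_den (X : cartan_type) (t : CC) : CC :=
  let: (a, b, h, p2, q2, r) := table X in
  (1 - t ^+ 2) * (1 - t ^+ a) * (1 - t ^+ b) * (1 - t ^+ h).

From HB Require Import structures.
From mathcomp Require Import all_boot all_order all_algebra.
From mathcomp Require Import complex Rstruct.
From Stdlib Require Import Reals Lra.
From mathcomp Require Import zify ring.
Set Implicit Arguments. Unset Strict Implicit. Unset Printing Implicit Defensive.
Import GRing.Theory Num.Theory.
Local Open Scope ring_scope.

(* Put x = t^2 and let z be a primitive h-th root of unity.  For d | h,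
   x^d - 1 is the product of the x - z^k over the multiples k of h/d, so every
   factor 1 - x^d of the right-hand side is, up to sign, a product of linear
   factors x - z^k.  For the exceptional types the identity thus reduces to an
   equality of multisets of residues mod h, checked by computation.  For the
   classical series the exponents are 1, ..., h - 1 (type A) or the odd
   residues mod h (types B, C; type D adds h/2), and the corresponding
   products are (x^h - 1)/(x - 1), x^(h/2) + 1 and (x^(h/2) + 1)(x + 1). *)

Definition expi (a : R) : CC := Complex (cos a) (sin a).

Lemma expiD a b : expi (a + b) = expi a * expi b.
Proof.
rewrite /expi cos_plus sin_plus; apply/eqP; rewrite eq_complex /=.
by rewrite !RplusE !RminusE !RmultE; apply/andP; split; apply/eqP; ring.
Qed.

Lemma expiX a k : expi a ^+ k = expi (a * INR k).
Proof.
elim: k => [|k IH]; first by rewrite Rmult_0_r /expi cos_0 sin_0.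
by rewrite exprS IH -expiD S_INR; congr expi; lra.
Qed.

Lemma expi_2PI : expi (2 * PI) = 1.
Proof. by rewrite /expi cos_2PI sin_2PI. Qed.

Lemma expi_neq1 a : (0 < a < 2 * PI)%R -> expi a != 1.
Proof.
move=> a_bounds; apply/eqP => -[cos_a _].
have sin_half_gt0 : (0 < sin (a / 2))%R by apply: sin_gt_0; lra.
have := cos_2a_sin (a / 2); rewrite (_ : 2 * (a / 2) = a)%R; last by lra.
change (cos a = 1%R) in cos_a; nra.
Qed.

Lemma zeta_prim_root h : (0 < h)%nat -> h.-primitive_root (zeta h).
Proof.
move=> h_gt0; apply/andP; split=> //; apply/forallP=> i; apply/eqP.
have hR_gt0 : (0 < INR h)%R by apply: lt_0_INR; apply/ltP.
have angle_mul_h : (2 * PI / INR h * INR h = 2 * PI)%R.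
  by rewrite /Rdiv Rmult_assoc Rinv_l ?Rmult_1_r //; lra.
rewrite unity_rootE expiX; case: (i.+1 =P h) => [-> | /eqP i1_neq_h].
  by rewrite angle_mul_h expi_2PI eqxx.
apply/negbTE/expi_neq1.
have i1_lt_h : (INR i.+1 < INR h)%R.
  by apply: lt_INR; apply/ltP; rewrite ltn_neqAle i1_neq_h ltn_ord.
have i1_gt0 : (0 < INR i.+1)%R by apply: lt_0_INR; apply/ltP.
have angle_gt0 : (0 < 2 * PI / INR h)%R.
  by apply: Rdiv_lt_0_compat; have := PI_RGT_0; lra.
nra.
Qed.

Section ScaledRoots.
Variables (F : fieldType) (n : nat) (w : F).
Hypothesis w_prim : n.-primitive_root w.

Lemma prod_sub_scaled_prim_root (c x : F) :
  \prod_(0 <= i < n) (x - c * w ^+ i) = x ^+ n - c ^+ n.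
Proof.
have n_gt0 := prim_order_gt0 w_prim.
have [-> | c_neq0] := eqVneq c 0.
  under eq_bigr do rewrite mul0r subr0.
  by rewrite prodr_const_nat subn0 expr0n gtn_eqF // subr0.
have := congr1 (horner^~ (x / c)) (factor_Xn_sub_1 w_prim).
rewrite horner_prod hornerD hornerN hornerXn hornerC.
under eq_bigr do rewrite hornerXsubC.
move=> prod_eval.
transitivity (\prod_(0 <= i < n) (c * (x / c - w ^+ i))).
  by apply: eq_bigr => i _; rewrite mulrBr mulrCA divff ?mulr1.
rewrite big_split /= prodr_const_nat subn0 prod_eval.
by rewrite mulrBr -exprMn mulrCA divff ?mulr1.
Qed.

End ScaledRoots.

Lemma prim_expr_half (R : idomainType) m (z : R) :
  (2 * m).-primitive_root z -> z ^+ m = -1.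
Proof.
move=> z_prim; have m_gt0 : (0 < m)%nat.
  by have := prim_order_gt0 z_prim; rewrite muln_gt0.
have : (z ^+ m) ^+ 2 == 1 by rewrite -exprM mulnC prim_expr_order.
rewrite sqrf_eq1 -(prim_order_dvd z_prim) => /orP[|/eqP //].
by rewrite gtnNdvd // -{1}(mul1n m) ltn_pmul2r.
Qed.

(* For z a primitive n-th root of unity and d | n, the z^k with k in
   [unity_root_exps n d] are the d-th roots of unity. *)
Definition unity_root_exps (n d : nat) : seq nat :=
  [seq n %/ d * j | j <- iota 0 d]%nat.

Definition unity_root_exps_of n (ds : seq nat) : seq nat :=
  flatten [seq unity_root_exps n d | d <- ds].

Section RootsOfUnity.
Variables (F : fieldType) (n : nat) (z : F).
Hypothesis z_prim : n.-primitive_root z.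

Lemma prod_sub_unity_root_exps d x : (d %| n)%nat ->
  \prod_(k <- unity_root_exps n d) (x - z ^+ k) = x ^+ d - 1.
Proof.
move=> d_dvd_n; rewrite big_map -[in RHS](expr1n F d).
rewrite -(prod_sub_scaled_prim_root (dvdn_prim_root z_prim d_dvd_n)).
by rewrite /index_iota subn0; apply: eq_bigr => j _; rewrite mul1r exprM.
Qed.

Lemma prod_sub_expr_modn s x :
  \prod_(k <- s) (x - z ^+ k) =
    \prod_(k <- [seq k %% n | k <- s]%nat) (x - z ^+ k).
Proof. by rewrite big_map; apply: eq_bigr => k _; rewrite prim_expr_mod. Qed.

Lemma prod_one_subX_unity_roots ds x : all (dvdn^~ n) ds ->
  \prod_(d <- ds) (1 - x ^+ d) =
    (-1) ^+ size ds * \prod_(k <- unity_root_exps_of n ds) (x - z ^+ k).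
Proof.
elim: ds => [|d ds IHds] /=; first by rewrite !big_nil mul1r.
move=> /andP[d_dvd_n ds_dvd_n]; rewrite big_cons big_cat /= IHds //.
by rewrite prod_sub_unity_root_exps // -opprB exprS !mulNr mul1r mulrCA.
Qed.

Lemma prod_sub_mul_prod_one_subX e ds es x :
  all (dvdn^~ n) ds -> all (dvdn^~ n) es -> size ds = size es ->
  perm_eq [seq k %% n | k <- e ++ unity_root_exps_of n ds]%nat
          [seq k %% n | k <- unity_root_exps_of n es]%nat ->
  \prod_(k <- e) (x - z ^+ k) * \prod_(d <- ds) (1 - x ^+ d) =
    \prod_(d <- es) (1 - x ^+ d).
Proof.
move=> ds_dvd_n es_dvd_n size_ds_es residues_perm.
rewrite !prod_one_subX_unity_roots // size_ds_es mulrCA -big_cat; congr (_ * _).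
by rewrite prod_sub_expr_modn [RHS]prod_sub_expr_modn; apply: perm_big.
Qed.

Lemma prod_sub_nontrivial_prim_root_expr x :
  (x - 1) * \prod_(k <- iota 1 n.-1) (x - z ^+ k) = x ^+ n - 1.
Proof.
have := prod_sub_scaled_prim_root z_prim 1 x; rewrite expr1n => <-.
have -> : index_iota 0 n = 0%nat :: iota 1 n.-1.
  by rewrite /index_iota subn0 -{1}(prednK (prim_order_gt0 z_prim)).
rewrite big_cons mul1r expr0; congr (_ * _).
by apply: eq_bigr => k _; rewrite mul1r.
Qed.

End RootsOfUnity.

Lemma prod_sub_odd_prim_root_expr (F : fieldType) m (z : F) x :
  (2 * m).-primitive_root z ->
  \prod_(i <- iota 0 m) (x - z ^+ (2 * i).+1) = x ^+ m + 1.
Proof.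
move=> z_prim; have m_gt0 : (0 < m)%nat.
  by have := prim_order_gt0 z_prim; rewrite muln_gt0.
have := dvdn_prim_root z_prim (dvdn_mull 2 (dvdnn m)).
rewrite mulnK // => z2_prim.
have -> : iota 0 m = index_iota 0 m by rewrite /index_iota subn0.
under eq_bigr do rewrite exprS exprM.
by rewrite prod_sub_scaled_prim_root // (prim_expr_half z_prim) opprK.
Qed.

Definition coxeter_charpoly (X : cartan_type) (x : CC) : CC :=
  \prod_(m <- exponents X) (x - zeta (coxeter_number X) ^+ m).

Lemma coxeter_charpoly_TA l x :
  (x - 1) * coxeter_charpoly (TA l) x = x ^+ l.+1 - 1.
Proof.
exact (prod_sub_nontrivial_prim_root_expr (zeta_prim_root (ltn0Sn l)) x).
Qed.

Lemma coxeter_charpoly_TB l x : (0 < l)%nat ->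
  coxeter_charpoly (TB l) x = x ^+ l + 1.
Proof.
move=> l_gt0; rewrite /coxeter_charpoly /= big_map.
by apply: prod_sub_odd_prim_root_expr; apply: zeta_prim_root; rewrite muln_gt0.
Qed.

Lemma coxeter_charpoly_TD l x : (2 <= l)%nat ->
  coxeter_charpoly (TD l) x = (x ^+ l.-1 + 1) * (x + 1).
Proof.
move=> l_ge2.
have h_prim : (2 * l.-1).-primitive_root (zeta (coxeter_number (TD l))).
  by rewrite /= (_ : 2 * l - 2 = 2 * l.-1)%nat ?zeta_prim_root //; lia.
rewrite /coxeter_charpoly /= -cats1 big_cat big_seq1 big_map.
by rewrite (prod_sub_odd_prim_root_expr _ h_prim) (prim_expr_half h_prim) opprK.
Qed.

Lemma charpoly_mul_den_TA l t :
  coxeter_charpoly (TA l) (t ^+ 2) * rhs_den (TA l) t = rhs_num (TA l) t.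
Proof.
have := coxeter_charpoly_TA l (t ^+ 2); rewrite -exprM => charpoly_eq.
rewrite /rhs_den /rhs_num /=.
have -> : t ^+ (2 * l.+1) = (t ^+ 2 - 1) * coxeter_charpoly (TA l) (t ^+ 2) + 1.
  by rewrite charpoly_eq subrK.
ring.
Qed.

Lemma charpoly_mul_den_TB l t : (3 <= l)%nat ->
  coxeter_charpoly (TB l) (t ^+ 2) * rhs_den (TB l) t = rhs_num (TB l) t.
Proof.
move=> l_ge3; rewrite coxeter_charpoly_TB; last by lia.
rewrite /rhs_den /rhs_num /= (_ : 2 * l - 2 = 2 * (l - 1))%nat; last by lia.
rewrite [(2 * (2 * l))%nat]mulnC !exprM.
ring.
Qed.

Lemma charpoly_mul_den_TC l t : (2 <= l)%nat ->
  coxeter_charpoly (TC l) (t ^+ 2) * rhs_den (TC l) t = rhs_num (TC l) t.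
Proof.
move=> l_ge2.
change (coxeter_charpoly (TB l) (t ^+ 2) * rhs_den (TC l) t = rhs_num (TC l) t).
rewrite coxeter_charpoly_TB; last by lia.
rewrite /rhs_den /rhs_num /= [(2 * (2 * l))%nat]mulnC !exprM.
ring.
Qed.

Lemma charpoly_mul_den_TD l t : (4 <= l)%nat ->
  coxeter_charpoly (TD l) (t ^+ 2) * rhs_den (TD l) t = rhs_num (TD l) t.
Proof.
move=> l_ge4; rewrite coxeter_charpoly_TD; last by lia.
rewrite /rhs_den /rhs_num /= (_ : 2 * l - 2 = 2 * l.-1)%nat; last by lia.
rewrite (_ : 2 * l - 4 = 2 * (l - 2))%nat; last by lia.
rewrite [(2 * (2 * l.-1))%nat]mulnC !exprM.
ring.
Qed.

Definition rhs_den_degrees (X : cartan_type) : seq nat :=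
  let: (a, b, h, _, _, _) := table X in [:: 2; a; b; h]%nat.

Definition rhs_num_degrees (X : cartan_type) : seq nat :=
  let: (_, _, h, p2, q2, r) := table X in [:: 2 * h; p2; q2; 2 * r]%nat.

Lemma rhs_denE X t : rhs_den X t = \prod_(d <- rhs_den_degrees X) (1 - t ^+ d).
Proof.
rewrite /rhs_den /rhs_den_degrees; case: (table X) => [[[[[a b] h] _] _] _].
by rewrite !big_cons big_nil mulr1 !mulrA.
Qed.

Lemma rhs_numE X t : rhs_num X t = \prod_(d <- rhs_num_degrees X) (1 - t ^+ d).
Proof.
rewrite /rhs_num /rhs_num_degrees; case: (table X) => [[[[[_ _] h] p2] q2] r].
by rewrite !big_cons big_nil mulr1 !mulrA.
Qed.

Lemma prod_one_sub_sqr (t : CC) ds :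
  \prod_(d <- [seq 2 * d | d <- ds]%nat) (1 - t ^+ d) =
    \prod_(d <- ds) (1 - (t ^+ 2) ^+ d).
Proof. by rewrite big_map; under eq_bigr do rewrite exprM. Qed.

(* [cs] lists the factors common to numerator and denominator; they need not
   divide h (1 - t^8 for E7). *)
Lemma charpoly_mul_den_of_residues X ds es cs t (h := coxeter_number X) :
  (0 < h)%nat ->
  perm_eq (rhs_den_degrees X) [seq 2 * d | d <- ds ++ cs]%nat ->
  perm_eq (rhs_num_degrees X) [seq 2 * d | d <- es ++ cs]%nat ->
  all (dvdn^~ h) ds -> all (dvdn^~ h) es -> size ds = size es ->
  perm_eq [seq k %% h | k <- exponents X ++ unity_root_exps_of h ds]%nat
          [seq k %% h | k <- unity_root_exps_of h es]%nat ->
  coxeter_charpoly X (t ^+ 2) * rhs_den X t = rhs_num X t.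
Proof.
move=> h_gt0 den_perm num_perm ds_dvd_h es_dvd_h size_ds_es residues_perm.
rewrite rhs_denE rhs_numE (perm_big _ den_perm) (perm_big _ num_perm).
rewrite !prod_one_sub_sqr !big_cat mulrA; congr (_ * _).
exact: (prod_sub_mul_prod_one_subX (zeta_prim_root h_gt0)).
Qed.

Lemma charpoly_mul_den_TE6 t :
  coxeter_charpoly TE6 (t ^+ 2) * rhs_den TE6 t = rhs_num TE6 t.
Proof.
by apply: (charpoly_mul_den_of_residues (ds := [:: 1; 3; 4; 6])
  (es := [:: 12; 3; 3; 2]) (cs := [::])).
Qed.

Lemma charpoly_mul_den_TE7 t :
  coxeter_charpoly TE7 (t ^+ 2) * rhs_den TE7 t = rhs_num TE7 t.
Proof.
by apply: (charpoly_mul_den_of_residues (ds := [:: 1; 6; 9])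
  (es := [:: 18; 3; 2]) (cs := [:: 4])).
Qed.

Lemma charpoly_mul_den_TE8 t :
  coxeter_charpoly TE8 (t ^+ 2) * rhs_den TE8 t = rhs_num TE8 t.
Proof.
by apply: (charpoly_mul_den_of_residues (ds := [:: 1; 6; 10; 15])
  (es := [:: 30; 5; 3; 2]) (cs := [::])).
Qed.

Lemma charpoly_mul_den_TF4 t :
  coxeter_charpoly TF4 (t ^+ 2) * rhs_den TF4 t = rhs_num TF4 t.
Proof.
by apply: (charpoly_mul_den_of_residues (ds := [:: 1; 3; 4; 6])
  (es := [:: 12; 3; 2; 1]) (cs := [::])).
Qed.

Lemma charpoly_mul_den_TG2 t :
  coxeter_charpoly TG2 (t ^+ 2) * rhs_den TG2 t = rhs_num TG2 t.
Proof.
by apply: (charpoly_mul_den_of_residues (ds := [:: 1; 2; 2; 3])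
  (es := [:: 6; 2; 1; 1]) (cs := [::])).
Qed.

Lemma coxeter_charpoly_mul_den X t : admissible X ->
  coxeter_charpoly X (t ^+ 2) * rhs_den X t = rhs_num X t.
Proof.
case: X => [l|l|l|l| | | | | ] /= rank_ok.
- exact: charpoly_mul_den_TA.
- exact: charpoly_mul_den_TB.
- exact: charpoly_mul_den_TC.
- exact: charpoly_mul_den_TD.
- exact: charpoly_mul_den_TE6.
- exact: charpoly_mul_den_TE7.
- exact: charpoly_mul_den_TE8.
- exact: charpoly_mul_den_TF4.
- exact: charpoly_mul_den_TG2.
Qed.

Theorem mainTheorem6 (X : cartan_type) (t : CC) :
  admissible X ->
  rhs_den X t != 0 ->
  \prod_(m <- exponents X) (t ^+ 2 - zeta (coxeter_number X) ^+ m)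
    = rhs_num X t / rhs_den X t.
Proof.
move=> admissible_X den_neq0; apply: (canRL (mulfK den_neq0)).
exact: coxeter_charpoly_mul_den.
Qed.
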